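(* Let $X\subseteq A^{\mathbb{N}}$ be a (one-sided) sofic shift over a finite alphabet $A$ with exactly one periodic point. Then this periodic point is $a^\omega$ for some letter $a\in A$, $X$ is countable, and for any bijection $\pi\colon A\to\{0,\dots,|A|-1\}$ with $\pi(a)=0$ the set $\pi(X)\subseteq\mathbb{N}^{\mathbb{N}}$ has finite coding dimension.
   Context: A one-sided sofic shift is the set of labels of right-infinite paths in a finite edge-labeled graph. A periodic point is $\mathbf{x}\in X$ with $\mathbf{x}=u^\omega$ for some nonempty word $u$. $\pi$ is applied letterwise. The coding dimension of $Y\subseteq\mathbb{N}^{\mathbb{N}}$ is the least $d\in\mathbb{N}$ with $\sum_iy_i\le d$ for all $\mathbf{y}\in Y$, if it exists. *)

From mathcomp Require Import all_boot.
Set Implicit Arguments. Unset Strict Implicit. Unset Printing Implicit Defensive.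

(* Labels of right-infinite paths in the finite edge-labelled graph
   (vertices V, edges E, source s, target t, label l). *)
Definition path_labels (A V E : Type) (s t : E -> V) (l : E -> A) (x : nat -> A) : Prop :=
  exists e : nat -> E, (forall n, t (e n) = s (e n.+1)) /\ (forall n, x n = l (e n)).

Definition sofic_shift (A : finType) (X : (nat -> A) -> Prop) : Prop :=
  exists (V E : finType) (s t : E -> V) (l : E -> A),
    forall x, X x <-> path_labels s t l x.

(* u^omega for a word u (only meaningful for u nonempty). *)
Definition omega (A : Type) (a0 : A) (u : seq A) : nat -> A :=
  fun n => nth a0 u (n %% size u).

Definition periodic_seq (A : Type) (x : nat -> A) : Prop :=
  exists u : seq A, exists a0 : A, 0 < size u /\ forall n, x n = omega a0 u n.

Definition periodic_point (A : Type) (X : (nat -> A) -> Prop) (x : nat -> A) : Prop :=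
  X x /\ periodic_seq x.

Definition countable_set (T : Type) (X : T -> Prop) : Prop :=
  exists f : T -> nat, forall x y, X x -> X y -> f x = f y -> x = y.

Definition image_letterwise (A B : Type) (pi : A -> B) (X : (nat -> A) -> Prop)
  : (nat -> B) -> Prop :=
  fun y => exists x, X x /\ forall n, y n = pi (x n).

(* Y has finite coding dimension: some d in N bounds sum_i y_i for all y in Y
   (the infinite sum of naturals is <= d iff all its partial sums are). *)
Definition finite_coding_dimension (Y : (nat -> nat) -> Prop) : Prop :=
  exists d : nat, forall y, Y y -> forall n, \sum_(i < n) y i <= d.

(* Write X as the set of label sequences of walks e : nat -> E in a finite
   labelled graph.  The argument has three parts.
   1. X is closed under the shift, and the shift of a periodic sequence is
      periodic; so the shifted periodic point is again a periodic point of X,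
      hence equal to it by uniqueness.  A sequence equal to its own shift is
      constant: the periodic point is a^omega.
   2. If a walk visits the same edge twice, at times i < j, repeating the loop
      e i, ..., e (j-1) forever gives a periodic point of X, which must be
      a^omega; hence every label on the loop is a.  Consequently the positions
      of a walk carrying a label other than a use pairwise distinct edges, and
      every x in X has at most #|E| letters different from a.
   3. A sequence with boundedly many letters different from a is eventually a,
      so it is determined by a finite word; this injects X into nat.  Letters
      different from a are coded by numbers < #|A| and a by 0, so every partial
      sum of pi(x) is at most #|E| * (#|A| - 1). *)

From Stdlib Require Import ClassicalEpsilon Classical.
From Stdlib Require Import FunctionalExtensionality PropExtensionality.
From mathcomp Require Import all_boot.
From mathcomp Require Import zify.
Set Implicit Arguments. Unset Strict Implicit.

Lemma periodic_of (A : Type) (x : nat -> A) p :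
  0 < p -> (forall n, x n = x (n %% p)) -> periodic_seq x.
Proof.
move=> p_gt0 xp; exists (mkseq x p), (x 0); rewrite size_mkseq; split=> // n.
by rewrite /omega size_mkseq nth_mkseq ?ltn_pmod // -xp.
Qed.

Lemma periodic_mod (A : Type) (x : nat -> A) :
  periodic_seq x -> exists2 p, 0 < p & forall n, x n = x (n %% p).
Proof.
by case=> u [a0 [u_gt0 xu]]; exists (size u) => // n; rewrite !xu /omega modn_mod.
Qed.

Lemma periodic_shift (A : Type) (x : nat -> A) :
  periodic_seq x -> periodic_seq (fun n => x n.+1).
Proof.
case/periodic_mod=> p p_gt0 xp; apply: (periodic_of p_gt0) => n /=.
by rewrite xp [RHS]xp -[n.+1]addn1 -[(n %% p).+1]addn1 modnDml.
Qed.

Lemma unique_periodic_point_constant (A : Type) (Y : (nat -> A) -> Prop) x0 :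
  (forall x, Y x -> Y (fun n => x n.+1)) ->
  periodic_point Y x0 -> (forall x, periodic_point Y x -> x0 = x) ->
  forall n, x0 n = x0 0.
Proof.
move=> shiftY [Yx0 per_x0] uniq_x0.
have fix_shift : x0 = (fun n => x0 n.+1).
  by apply: uniq_x0; split; [exact: shiftY | exact: periodic_shift].
by elim=> // n IH; rewrite -IH {2}fix_shift.
Qed.

Section Walks.

Variables (A V E : Type) (s t : E -> V) (l : E -> A).

Definition walk (e : nat -> E) : Prop := forall n, t (e n) = s (e n.+1).

Lemma path_labels_shift (x : nat -> A) :
  path_labels s t l x -> path_labels s t l (fun n => x n.+1).
Proof. by case=> e [walk_e xe]; exists (fun n => e n.+1). Qed.

Lemma loop_walk (e : nat -> E) i j :
  walk e -> i < j -> e i = e j -> walk (fun n => e (i + n %% (j - i))).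
Proof.
move=> walk_e ij eij n; set p := j - i.
have p_gt0 : 0 < p by rewrite subn_gt0.
have [in_loop | wrap] := ltnP (n %% p).+1 p.
  have -> : n.+1 %% p = (n %% p).+1.
    by rewrite -[n.+1]addn1 -modnDml addn1 modn_small.
  by rewrite addnS; apply: walk_e.
have last_p : (n %% p).+1 = p by apply/eqP; rewrite eqn_leq wrap ltn_pmod.
rewrite -[n.+1]addn1 -modnDml addn1 last_p modnn addn0 eij walk_e.
by rewrite -addnS last_p subnKC // ltnW.
Qed.

End Walks.

Section UniquePeriodicLetter.

Variables (A : eqType) (V E : finType) (s t : E -> V) (l : E -> A) (a : A).

Hypothesis periodic_is_a :
  forall x, path_labels s t l x -> periodic_seq x -> forall n, x n = a.

Lemma loop_labels (e : nat -> E) i j k :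
  walk s t e -> i < j -> e i = e j -> i <= k < j -> l (e k) = a.
Proof.
move=> walk_e ij eij /andP[ik kj]; set p := j - i.
have p_gt0 : 0 < p by rewrite subn_gt0.
pose e' n := e (i + n %% p).
have loop_labels : path_labels s t l (fun n => l (e' n)).
  by exists e'; split=> //; apply: loop_walk walk_e ij eij.
have loop_periodic : periodic_seq (fun n => l (e' n)).
  by apply: (periodic_of p_gt0) => n; rewrite /e' modn_mod.
have := periodic_is_a loop_labels loop_periodic (k - i).
by rewrite /e' modn_small ?subnKC //; lia.
Qed.

Lemma non_a_edges_inj (e : nat -> E) i j :
  walk s t e -> l (e i) != a -> l (e j) != a -> e i = e j -> i = j.
Proof.
move=> walk_e lei lej eij; case: (ltngtP i j) => // ij.
  by move: lei; rewrite (loop_labels walk_e ij eij) ?leqnn ?ij ?eqxx.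
by move: lej; rewrite (loop_labels walk_e ij (esym eij)) ?leqnn ?ij ?eqxx.
Qed.

Lemma count_non_a_le (x : nat -> A) n :
  path_labels s t l x -> count (fun i => x i != a) (iota 0 n) <= #|E|.
Proof.
case=> e [walk_e xe]; rewrite -size_filter.
set L := filter _ _.
have uniq_edges : uniq (map e L).
  rewrite map_inj_in_uniq ?filter_uniq ?iota_uniq // => i j.
  rewrite !mem_filter !xe => /andP[lei _] /andP[lej _].
  exact: non_a_edges_inj.
by rewrite -(size_map e) -(card_uniqP uniq_edges) max_card.
Qed.

End UniquePeriodicLetter.

Lemma bounded_count_eventually (A : eqType) (x : nat -> A) a B :
  (forall n, count (fun i => x i != a) (iota 0 n) <= B) ->
  exists N, forall n, N <= n -> x n = a.
Proof.
move=> bounded; apply: NNPP => never.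
have unbounded : forall N, exists2 n, N <= n & x n != a.
  move=> N; apply: NNPP => none; apply: never; exists N => n Nn.
  by apply/eqP; apply: NNPP => xn; apply: none; exists n => //; apply/negP.
have grows : forall k, exists n, k <= count (fun i => x i != a) (iota 0 n).
  elim=> [|k [n kn]]; first by exists 0.
  have [m nm xm] := unbounded n; exists m.+1.
  have : count (fun i => x i != a) (iota 0 n) <=
         count (fun i => x i != a) (iota 0 m).
    by rewrite -(subnKC nm) iotaD count_cat leq_addr.
  by rewrite -[m.+1]addn1 iotaD count_cat /= xm /=; lia.
by have [n] := grows B.+1; rewrite ltnNge bounded.
Qed.

Lemma countable_finite_support (A : countType) (Y : (nat -> A) -> Prop) a :
  (forall x, Y x -> exists N, forall n, N <= n -> x n = a) -> countable_set Y.
Proof.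
move=> eventually_a.
have word_of : forall x, Y x -> exists w : seq A, forall n, x n = nth a w n.
  move=> x /eventually_a [N xN]; exists (mkseq x N) => n.
  have [nN | Nn] := ltnP n N; first by rewrite nth_mkseq.
  by rewrite nth_default ?size_mkseq // xN.
pose w x := epsilon (inhabits ([::] : seq A)) (fun w => forall n, x n = nth a w n).
exists (fun x => pickle (w x)) => x y Yx Yy /(pcan_inj pickleK_inv) wxy.
have wx := epsilon_spec (inhabits ([::] : seq A)) _ (word_of x Yx).
have wy := epsilon_spec (inhabits ([::] : seq A)) _ (word_of y Yy).
by apply: functional_extensionality => n; rewrite wx wy -/(w x) -/(w y) wxy.
Qed.

Lemma sum_code_le (A : eqType) (f : A -> nat) (x : nat -> A) a m n :
  f a = 0 -> (forall b, f b <= m) ->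
  \sum_(i < n) f (x i) <= count (fun i => x i != a) (iota 0 n) * m.
Proof.
move=> fa0 f_le; rewrite -(big_mkord xpredT (fun i => f (x i))) /index_iota subn0.
rewrite (bigID (fun i => x i == a)) /= big1 => [|i /eqP -> //].
rewrite add0n -sum1_count big_distrl /=.
by apply: leq_sum => i _; rewrite mul1n.
Qed.

Theorem mainTheorem13 (A : finType) (X : (nat -> A) -> Prop) :
  sofic_shift X ->
  (exists! x, periodic_point X x) ->
  exists a : A,
    (forall x, periodic_point X x -> forall n, x n = a) /\
    countable_set X /\
    (forall pi : A -> 'I_#|A|, bijective pi -> nat_of_ord (pi a) = 0 ->
       finite_coding_dimension
         (image_letterwise (fun b => nat_of_ord (pi b)) X)).
Proof.
move=> [V [E [s [t [l XE]]]]] [x0 [per_x0 uniq_x0]].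
have X_labels : X = path_labels s t l.
  by apply: functional_extensionality => x; apply: propositional_extensionality.
subst X; set a := x0 0; exists a.
have x0_const := unique_periodic_point_constant
  (@path_labels_shift _ _ _ s t l) per_x0 uniq_x0.
have periodic_is_a : forall x, periodic_point (path_labels s t l) x ->
    forall n, x n = a by move=> x /uniq_x0 <- n; apply: x0_const.
have few_non_a : forall x, path_labels s t l x ->
    forall n, count (fun i => x i != a) (iota 0 n) <= #|E|.
  move=> x Xx n; apply: count_non_a_le Xx => y Xy Py.
  exact: periodic_is_a.
split=> //; split.
  apply: (countable_finite_support (a := a)) => x /few_non_a.
  exact: bounded_count_eventually.
move=> pi _ pi_a; exists (#|E| * (#|A|).-1) => y [x [Xx yx]] n.
under eq_bigr => i _ do rewrite yx.
have code_le : forall b, pi b <= (#|A|).-1.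
  by move=> b; rewrite -ltnS (ltn_predK (ltn_ord (pi b))).
apply: leq_trans (sum_code_le x n pi_a code_le) _.
by rewrite leq_mul2r few_non_a ?orbT.
Qed.
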